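(* For any Markov policy $\pi$ and every $h\in[H]$ (for claim 3, $h\ge1$): (1) $\bar d^\pi_h\le d^\pi_h$ pointwise. (2) If for all $h'<h$ we have $d^\pi_{h'}\le C^{\mathbf x}_{h'}d^D_{h'}$ and $\pi_{h'}\le C^{\mathbf a}_{h'}\pi^D_{h'}$ pointwise, then $\bar d^\pi_h=d^\pi_h$. (3) $\|\bar d^\pi_h-d^\pi_h\|_1\le\|\bar d^\pi_{h-1}-d^\pi_{h-1}\|_1+\|\bar d^\pi_{h-1}-\bar d^\pi_{h-1}\wedge C^{\mathbf x}_{h-1}d^D_{h-1}\|_1+\|\mathbf P^\pi_{h-1}d^\pi_{h-1}-\mathbf P^{\bar\pi}_{h-1}d^\pi_{h-1}\|_1$.
   Context: Setting: finite-horizon episodic MDP with measurable state space $\mathcal X$, finite action space $\mathcal A$, $[H]=\{0,\dots,H-1\}$, transition densities $P_h(\cdot\mid x,a)$, initial distribution $d_0$; $d^\pi_h$ is the density of $x_h$ under the Markov policy $\pi=(\pi_h)$. Offline data: for each $h$, $\mathcal D_h$ consists of i.i.d. tuples $(x_h,a_h,x_{h+1})$ (conditionally on earlier data) generated by an arbitrary (possibly history-dependent) roll-in policy to $x_h$, then $a_h\sim\pi^D_h(\cdot\mid x_h)$ for a Markov single-step policy $\pi^D_h$, then $x_{h+1}\sim P_h$; $d^D_h$ is the marginal density of $x_h$ in $\mathcal D_h$. Notation: $a\wedge b=\min(a,b)$ pointwise; for $d:\mathcal X\to\mathbb R$ and nonnegative $\pi_h(a\mid x)$, $(\mathbf P^\pi_hd)(x'):=\iint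 P_h(x'\mid x,a)\pi_h(a\mid x)d(x)\mathrm dx\,\mathrm da$. Recursively clipped occupancy: given thresholds $C^{\mathbf x}_h,C^{\mathbf a}_h>0$, the pseudo-policy $\bar\pi_h:=\pi_h\wedge C^{\mathbf a}_h\pi^D_h$, $\bar d^\pi_0:=d_0$, and $\bar d^\pi_h:=\mathbf P^{\bar\pi}_{h-1}(\bar d^\pi_{h-1}\wedge C^{\mathbf x}_{h-1}d^D_{h-1})$ for $h\ge1$. *)

From HB Require Import structures.
From mathcomp Require Import all_boot all_order all_algebra.
From mathcomp Require Import all_classical all_reals all_analysis.
Set Implicit Arguments. Unset Strict Implicit. Unset Printing Implicit Defensive.
Import Order.TTheory GRing.Theory Num.Theory.
Local Open Scope classical_set_scope.
Local Open Scope ring_scope.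
Local Open Scope ereal_scope.

Section MDP.
Context {R : realType} {dX : measure_display} {X : measurableType dX}
        (mu : {measure set X -> \bar R}) {A : finType}.

(* (P^pol_h d)(x') = \int \sum_a P_h(x'|x,a) pol(a|x) d(x) dmu(x);
   P_h x a x' stands for the density P_h(x' | x, a) w.r.t. mu,
   pol x a for pol_h(a | x). *)
Definition Pop (Ph : X -> A -> X -> R) (pol : X -> A -> R)
    (d : X -> \bar R) : X -> \bar R :=
  fun x' => \int[mu]_x ((\sum_(a : A) (Ph x a x' * pol x a))%R%:E * d x).

Fixpoint occ (P : nat -> X -> A -> X -> R) (d0 : X -> R)
    (pi : nat -> X -> A -> R) (h : nat) : X -> \bar R :=
  match h with
  | 0%N => fun x => (d0 x)%:E
  | h'.+1 => Pop (P h') (pi h') (occ P d0 pi h')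
  end.

Definition pibar (pi piD : nat -> X -> A -> R) (Ca : nat -> R) :
    nat -> X -> A -> R :=
  fun h x a => Order.min (pi h x a) (Ca h * piD h x a)%R.

Definition clipx (dD : nat -> X -> R) (Cx : nat -> R) (h : nat)
    (d : X -> \bar R) : X -> \bar R :=
  fun x => Order.min (d x) ((Cx h * dD h x)%R%:E).

Fixpoint cocc (P : nat -> X -> A -> X -> R) (d0 : X -> R)
    (pi piD : nat -> X -> A -> R) (dD : nat -> X -> R) (Cx Ca : nat -> R)
    (h : nat) : X -> \bar R :=
  match h with
  | 0%N => fun x => (d0 x)%:E
  | h'.+1 => Pop (P h') (pibar pi piD Ca h')
                 (clipx dD Cx h' (cocc P d0 pi piD dD Cx Ca h'))
  end.

Definition L1dist (f g : X -> \bar R) : \bar R := \int[mu]_x `|f x - g x|.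

End MDP.

From HB Require Import structures.
From mathcomp Require Import all_boot all_order all_algebra.
From mathcomp Require Import all_classical all_reals all_analysis.
From mathcomp Require Import measurable_realfun lra.
Import Order.TTheory GRing.Theory Num.Theory.
Local Open Scope classical_set_scope.
Local Open Scope ring_scope.
Local Open Scope ereal_scope.

(* Both occupancies iterate the positive operator
   P^pol d (x') = \int K_pol(x, x') d(x) dmu(x),  K_pol(x, x') = \sum_a P(x'|x,a) pol(a|x),
   which is monotone in pol and in d, additive in d and, by Tonelli, does not
   increase mass when \sum_a pol(a|x) <= 1.  Clipping lowers both the policy and
   the state density, so (1) follows by induction; under the coverage
   hypotheses clipping is inactive, which gives (2).  For (3) let d = d^pi_{h-1}
   and e the clipped bar d_{h-1}, so that e <= d.  Then
   bar d_h = P^pibar e <= P^pibar d <= P^pi d = d^pi_h, hence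
   |bar d_h - d^pi_h| <= P^pibar (d - e) + |P^pi d - P^pibar d|, and the mass
   of P^pibar (d - e) is at most \int (d - e) <= |bar d_{h-1} - d|_1 + |bar d_{h-1} - e|_1. *)

Lemma sube_le_abse_via (R : realDomainType) (a b c : \bar R) :
  a - c <= `|b - a| + `|b - c|.
Proof.
case: a => [a||]; case: b => [b||]; case: c => [c||] //=;
  rewrite ?leey ?leNye // -!EFinD lee_fin.
by rewrite (le_trans (ler_norm _)) // (le_trans (ler_distD b _ _)) // distrC.
Qed.

(* Not the triangle inequality: [`|a - b|] can exceed [D] when [a = +oo]. *)
Lemma abse_sub_le_via (R : realDomainType) (a b c D : \bar R) :
  0 <= a -> 0 <= D -> b = a + D -> b <= c -> `|a - c| <= D + `|c - b|.
Proof.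
case: a => [a||]; case: D => [D||]; case: c => [c||] //= a0 D0 -> //=;
  rewrite ?leey ?leNye // -!EFinD !lee_fin in a0 D0 * => leac.
by rewrite distrC !ger0_norm; lra.
Qed.

Lemma measurable_abse_sub (R : realType) (d : measure_display)
    (T : measurableType d) (f g : T -> \bar R) :
  measurable_fun setT f -> measurable_fun setT g ->
  measurable_fun setT (fun x => `|f x - g x|).
Proof. by move=> mf mg; exact/measurableT_comp/emeasurable_funB. Qed.

Section transition_operator.
Context {R : realType} {dX : measure_display} {X : measurableType dX}
  (mu : {measure set X -> \bar R}) (mu_sigma_finite : sigma_finite setT mu)
  {A : finType}.

(* Tonelli needs a sigma-finite measure structure, which [mu] lacks: equip a
   convertible copy of it. *)
Definition sigma_mu : set X -> \bar R := mu.
HB.instance Definition _ := Measure.copy sigma_mu mu.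
HB.instance Definition _ :=
  @Measure_isSigmaFinite.Build _ X R sigma_mu mu_sigma_finite.

Variable Ph : X -> A -> X -> R.
Hypothesis mPh : forall a, measurable_fun setT (fun p : X * X => Ph p.1 a p.2).
Hypothesis Ph_ge0 : forall x a x', (0 <= Ph x a x')%R.

Definition mix_kernel (pol : X -> A -> R) (x x' : X) : R :=
  \sum_(a : A) Ph x a x' * pol x a.

Section policy.
Variable pol : X -> A -> R.
Hypothesis mpol : forall a, measurable_fun setT (fun x => pol x a).
Hypothesis pol_ge0 : forall x a, (0 <= pol x a)%R.

Lemma mix_kernel_ge0 x x' : (0 <= mix_kernel pol x x')%R.
Proof. by apply: sumr_ge0 => a _; rewrite mulr_ge0. Qed.

Let integrand (d : X -> \bar R) (p : X * X) := (mix_kernel pol p.1 p.2)%:E * d p.1.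

Let integrand_ge0 d p : (forall x, 0 <= d x) -> 0 <= integrand d p.
Proof. by move=> d_ge0; rewrite mule_ge0 ?lee_fin ?mix_kernel_ge0. Qed.

Lemma measurable_mix_kernel :
  measurable_fun setT (fun p : X * X => (mix_kernel pol p.1 p.2)%:E).
Proof.
apply/measurable_EFinP; apply: measurable_sum => a; apply: measurable_funM.
  exact: mPh.
exact: measurableT_comp (mpol a) measurable_fst.
Qed.

Lemma measurable_mix_kernell x' :
  measurable_fun setT (fun x => (mix_kernel pol x x')%:E).
Proof. exact: measurable_fun_pair1 measurable_mix_kernel. Qed.

Lemma measurable_mix_kernelr x :
  measurable_fun setT (fun x' => (mix_kernel pol x x')%:E).
Proof. exact: measurable_fun_pair2 measurable_mix_kernel. Qed.

Let measurable_integrand d : measurable_fun setT d -> measurable_fun setT (integrand d).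
Proof.
move=> md; apply: emeasurable_funM; first exact: measurable_mix_kernel.
exact: measurableT_comp md measurable_fst.
Qed.

Lemma Pop_ge0 (d : X -> \bar R) x' :
  (forall x, 0 <= d x) -> 0 <= Pop mu Ph pol d x'.
Proof.
by move=> d_ge0; apply: integral_ge0 => x _; rewrite mule_ge0 ?lee_fin ?mix_kernel_ge0.
Qed.

Lemma measurable_Pop (d : X -> \bar R) :
  measurable_fun setT d -> (forall x, 0 <= d x) ->
  measurable_fun setT (Pop mu Ph pol d).
Proof.
move=> md d_ge0.
apply: (@measurable_fun_fubini_tonelli_G _ _ X X R sigma_mu (integrand d)).
  exact: measurable_integrand.
by move=> p; exact: integrand_ge0.
Qed.

Lemma ge0_PopD (d1 d2 : X -> \bar R) x' :
  measurable_fun setT d1 -> measurable_fun setT d2 ->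
  (forall x, 0 <= d1 x) -> (forall x, 0 <= d2 x) ->
  Pop mu Ph pol (d1 \+ d2) x' = Pop mu Ph pol d1 x' + Pop mu Ph pol d2 x'.
Proof.
move=> md1 md2 d1_ge0 d2_ge0; rewrite /Pop -ge0_integralD //.
- by apply: eq_integral => x _; rewrite ge0_muleDr.
- by move=> x _; rewrite mule_ge0 ?lee_fin ?mix_kernel_ge0.
- exact: emeasurable_funM (measurable_mix_kernell _) md1.
- by move=> x _; rewrite mule_ge0 ?lee_fin ?mix_kernel_ge0.
- exact: emeasurable_funM (measurable_mix_kernell _) md2.
Qed.

Lemma integral_mix_kernel x :
  (forall a, \int[mu]_x' (Ph x a x')%:E = 1) ->
  \int[mu]_x' (mix_kernel pol x x')%:E = (\sum_(a : A) pol x a)%:E.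
Proof.
move=> Ph1; rewrite /mix_kernel.
have mPhx a : measurable_fun setT (fun x' => Ph x a x').
  exact: measurable_fun_pair2 x (mPh a).
under eq_integral do rewrite -sumEFin.
rewrite ge0_integral_sum //; last first.
- by move=> a x' _; rewrite lee_fin mulr_ge0.
- by move=> a; apply/measurable_EFinP/measurable_funM.
rewrite -sumEFin; apply: eq_bigr => a _.
under eq_integral do rewrite EFinM.
rewrite ge0_integralZr ?lee_fin ?Ph1 ?mul1e //.
- exact/measurable_EFinP.
- by move=> x' _; rewrite lee_fin.
Qed.

Lemma integral_Pop_le (d : X -> \bar R) :
  (forall x a, \int[mu]_x' (Ph x a x')%:E = 1) ->
  (forall x, \sum_(a : A) pol x a <= 1)%R ->
  measurable_fun setT d -> (forall x, 0 <= d x) ->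
  \int[mu]_x' Pop mu Ph pol d x' <= \int[mu]_x d x.
Proof.
move=> Ph1 pol_le1 md d_ge0.
have mf := measurable_integrand d md.
have f_ge0 p : 0 <= integrand d p by exact: integrand_ge0.
have -> : \int[mu]_x' Pop mu Ph pol d x' = \int[mu]_x \int[mu]_x' integrand d (x, x').
  exact: esym (@fubini_tonelli _ _ X X R sigma_mu sigma_mu _ mf f_ge0).
apply: ge0_le_integral => //.
- by move=> x _; apply: integral_ge0.
- exact: (@measurable_fun_fubini_tonelli_F _ _ X X R sigma_mu _ mf f_ge0).
move=> x _; rewrite /integrand /=.
have := d_ge0 x; case: (d x) => [r||] // r_ge0; last exact: leey.
rewrite ge0_integralZr //.
- by rewrite integral_mix_kernel // gee_pMl // lee_fin.
- exact: measurable_mix_kernelr.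
- by move=> x' _; rewrite lee_fin mix_kernel_ge0.
Qed.

End policy.

Lemma le_Pop (pol1 pol2 : X -> A -> R) (d1 d2 : X -> \bar R) x' :
  (forall a, measurable_fun setT (fun x => pol1 x a)) ->
  (forall a, measurable_fun setT (fun x => pol2 x a)) ->
  (forall x a, 0 <= pol1 x a <= pol2 x a)%R ->
  measurable_fun setT d1 -> measurable_fun setT d2 ->
  (forall x, 0 <= d1 x <= d2 x) ->
  Pop mu Ph pol1 d1 x' <= Pop mu Ph pol2 d2 x'.
Proof.
move=> mpol1 mpol2 pol12 md1 md2 d12.
have pol1_ge0 x a : (0 <= pol1 x a)%R by case/andP: (pol12 x a).
have d1_ge0 x : 0 <= d1 x by case/andP: (d12 x).
apply: ge0_le_integral => //.
- by move=> x _; rewrite mule_ge0 ?lee_fin ?mix_kernel_ge0.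
- exact: emeasurable_funM (measurable_mix_kernell _ mpol1 x') md1.
- exact: emeasurable_funM (measurable_mix_kernell _ mpol2 x') md2.
move=> x _; apply: lee_pmul; rewrite ?lee_fin ?mix_kernel_ge0 //.
- by apply: ler_sum => a _; apply: ler_wpM2l => //; case/andP: (pol12 x a).
- by case/andP: (d12 x).
Qed.

End transition_operator.

Section clipping.
Context {R : realType} {dX : measure_display} {X : measurableType dX}
  {A : finType}.
Implicit Types (pi piD : nat -> X -> A -> R) (dD : nat -> X -> R)
  (Cx Ca : nat -> R) (d : X -> \bar R).

Lemma pibar_le pi piD Ca h x a : (pibar pi piD Ca h x a <= pi h x a)%R.
Proof. by rewrite /pibar ge_min lexx. Qed.

Lemma pibar_ge0 pi piD Ca h x a :
  (0 <= pi h x a)%R -> (0 <= Ca h)%R -> (0 <= piD h x a)%R ->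
  (0 <= pibar pi piD Ca h x a)%R.
Proof. by move=> pi_ge0 Ca_ge0 piD_ge0; rewrite /pibar le_min pi_ge0 mulr_ge0. Qed.

Lemma measurable_pibar pi piD Ca h a :
  measurable_fun setT (fun x => pi h x a) ->
  measurable_fun setT (fun x => piD h x a) ->
  measurable_fun setT (fun x => pibar pi piD Ca h x a).
Proof. by move=> mpi mpiD; apply: measurable_minr => //; exact: measurable_funM. Qed.

Lemma pibar_id pi piD Ca h :
  (forall x a, pi h x a <= Ca h * piD h x a)%R -> pibar pi piD Ca h = pi h.
Proof. by move=> pi_le; apply/funext => x; apply/funext => a; rewrite /pibar min_l. Qed.

Lemma clipx_le dD Cx h d x : clipx dD Cx h d x <= d x.
Proof. by rewrite /clipx ge_min lexx. Qed.

Lemma clipx_ge0 dD Cx h d x :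
  0 <= d x -> (0 <= Cx h)%R -> (0 <= dD h x)%R -> 0 <= clipx dD Cx h d x.
Proof. by move=> d_ge0 Cx_ge0 dD_ge0; rewrite /clipx le_min d_ge0 lee_fin mulr_ge0. Qed.

Lemma clipx_fin_num dD Cx h d x :
  0 <= clipx dD Cx h d x -> clipx dD Cx h d x \is a fin_num.
Proof.
move=> ge0; rewrite ge0_fin_numE // (le_lt_trans _ (ltey (Cx h * dD h x)%:E)) //.
by rewrite /clipx ge_min lexx orbT.
Qed.

Lemma measurable_clipx dD Cx h d :
  measurable_fun setT (dD h) -> measurable_fun setT d ->
  measurable_fun setT (clipx dD Cx h d).
Proof.
move=> mdD md; apply: measurable_mine => //.
by apply/measurable_EFinP; exact: measurable_funM.
Qed.

Lemma clipx_id dD Cx h d :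
  (forall x, d x <= (Cx h * dD h x)%:E) -> clipx dD Cx h d = d.
Proof. by move=> d_le; apply/funext => x; rewrite /clipx min_l. Qed.

End clipping.

Section clipped_occupancy.
Context {R : realType} {dX : measure_display} {X : measurableType dX}
  {mu : {measure set X -> \bar R}} {A : finType} {H : nat}.
Variables (P : nat -> X -> A -> X -> R) (d0 : X -> R)
  (piD : nat -> X -> A -> R) (dD : nat -> X -> R) (Cx Ca : nat -> R)
  (pi : nat -> X -> A -> R).
Hypothesis mu_sigma_finite : sigma_finite setT mu.
Hypothesis mP : forall h a, (h < H)%N ->
  measurable_fun setT (fun p : X * X => P h p.1 a p.2).
Hypothesis P_ge0 : forall h x a x', (h < H)%N -> (0 <= P h x a x')%R.
Hypothesis P1 : forall h x a, (h < H)%N -> \int[mu]_x' (P h x a x')%:E = 1.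
Hypothesis md0 : measurable_fun setT d0.
Hypothesis d0_ge0 : forall x, (0 <= d0 x)%R.
Hypothesis mpiD : forall h a, (h < H)%N -> measurable_fun setT (fun x => piD h x a).
Hypothesis piD_ge0 : forall h x a, (h < H)%N -> (0 <= piD h x a)%R.
Hypothesis mdD : forall h, (h < H)%N -> measurable_fun setT (dD h).
Hypothesis dD_ge0 : forall h x, (h < H)%N -> (0 <= dD h x)%R.
Hypothesis Cx_gt0 : forall h, (h < H)%N -> (0 < Cx h)%R.
Hypothesis Ca_gt0 : forall h, (h < H)%N -> (0 < Ca h)%R.
Hypothesis mpi : forall h a, (h < H)%N -> measurable_fun setT (fun x => pi h x a).
Hypothesis pi_ge0 : forall h x a, (h < H)%N -> (0 <= pi h x a)%R.
Hypothesis pi1 : forall h x, (h < H)%N -> (\sum_(a : A) pi h x a)%R = 1%R.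

Local Notation dpi := (occ mu P d0 pi).
Local Notation dbar := (cocc mu P d0 pi piD dD Cx Ca).
Local Notation pib := (pibar pi piD Ca).
Local Notation clip := (clipx dD Cx).

Section level.
Context {k : nat}.
Hypothesis kH : (k < H)%N.

Lemma pibar_ge0_le x a : (0 <= pib k x a <= pi k x a)%R.
Proof. by rewrite pibar_le pibar_ge0 // ?pi_ge0 ?piD_ge0 ?ltW ?Ca_gt0. Qed.

Lemma sum_pibar_le1 x : (\sum_(a : A) pib k x a <= 1)%R.
Proof. by rewrite -(pi1 k x kH); apply: ler_sum => a _; exact: pibar_le. Qed.

Lemma clip_ge0 d x : 0 <= d x -> 0 <= clip k d x.
Proof. by move=> d_ge0; rewrite clipx_ge0 // ?dD_ge0 ?ltW ?Cx_gt0. Qed.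

Lemma measurable_pib a : measurable_fun setT (fun x => pib k x a).
Proof. exact: measurable_pibar (mpi k a kH) (mpiD k a kH). Qed.

Lemma measurable_clip d : measurable_fun setT d -> measurable_fun setT (clip k d).
Proof. exact: measurable_clipx (mdD k kH). Qed.

End level.

Lemma occ_ge0 {k} : (k <= H)%N -> forall x, 0 <= dpi k x.
Proof.
elim: k => [_ x|k IH kH x] /=; first by rewrite lee_fin.
apply: Pop_ge0 => [x1 a x2|x1 a|x1]; [exact: P_ge0|exact: pi_ge0|exact: IH (ltnW kH) x1].
Qed.

Lemma measurable_occ {k} : (k <= H)%N -> measurable_fun setT (dpi k).
Proof.
elim: k => [_|k IH kH] /=; first exact/measurable_EFinP.
apply: measurable_Pop => //.
- by move=> a; exact: mP.
- by move=> x a x'; exact: P_ge0.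
- by move=> a; exact: mpi.
- by move=> x a; exact: pi_ge0.
- exact: IH (ltnW kH).
- exact: occ_ge0 (ltnW kH).
Qed.

Lemma cocc_ge0 {k} : (k <= H)%N -> forall x, 0 <= dbar k x.
Proof.
elim: k => [_ x|k IH kH x] /=; first by rewrite lee_fin.
apply: Pop_ge0 => [x1 a x2|x1 a|x1]; first exact: P_ge0.
  by case/andP: (pibar_ge0_le kH x1 a).
by apply: clip_ge0 => //; exact: IH (ltnW kH) x1.
Qed.

Lemma measurable_cocc {k} : (k <= H)%N -> measurable_fun setT (dbar k).
Proof.
elim: k => [_|k IH kH] /=; first exact/measurable_EFinP.
apply: measurable_Pop => //.
- by move=> a; exact: mP.
- by move=> x a x'; exact: P_ge0.
- exact: measurable_pib.
- by move=> x a; case/andP: (pibar_ge0_le kH x a).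
- exact/measurable_clip/IH/ltnW.
- by move=> x; apply: clip_ge0 => //; exact: cocc_ge0 (ltnW kH) x.
Qed.

Lemma cocc_le_occ {k} : (k <= H)%N -> forall x, dbar k x <= dpi k x.
Proof.
elim: k => [//|k IH kH x] /=; have kH' := ltnW kH.
apply: le_Pop.
- by move=> a; exact: mP.
- by move=> x1 a x2; exact: P_ge0.
- exact: measurable_pib.
- by move=> a; exact: mpi.
- exact: pibar_ge0_le.
- exact/measurable_clip/measurable_cocc.
- exact: measurable_occ.
- move=> x1; rewrite clip_ge0 ?cocc_ge0 //=.
  exact: le_trans (clipx_le _ _ _ _ _) (IH kH' x1).
Qed.

Lemma cocc_eq_occ {k} : (k <= H)%N ->
  (forall h', (h' < k)%N ->
     (forall x, dpi h' x <= (Cx h' * dD h' x)%:E) /\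
     (forall x a, (pi h' x a <= Ca h' * piD h' x a)%R)) ->
  forall x, dbar k x = dpi k x.
Proof.
elim: k => [//|k IH kH covered x] /=.
have -> : dbar k = dpi k.
  by apply/funext; apply: IH (ltnW kH) _ => h' h'k; exact/covered/ltnW.
have [dpi_le pi_le] := covered k (ltnSn k).
by rewrite clipx_id // pibar_id.
Qed.

Section step.
Context {k : nat}.
Hypothesis kH : (k < H)%N.

Let kH' : (k <= H)%N := ltnW kH.
Local Notation e := (clip k (dbar k)).
Local Notation Pbar := (Pop mu (P k) (pib k)).

Let mPk a : measurable_fun setT (fun p : X * X => P k p.1 a p.2) := mP k a kH.
Let Pk_ge0 x a x' : (0 <= P k x a x')%R := P_ge0 k x a x' kH.
Let mpik a : measurable_fun setT (fun x => pi k x a) := mpi k a kH.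
Let pik_ge0 x a : (0 <= pi k x a)%R := pi_ge0 k x a kH.
Let mpibk := measurable_pib kH.
Let pibk_ge0_le := pibar_ge0_le kH.
Let pibk_ge0 x a : (0 <= pib k x a)%R.
Proof. by case/andP: (pibk_ge0_le x a). Qed.
Let mdpi := measurable_occ kH'.
Let mdbar := measurable_cocc kH'.
Let dpi_ge0 := occ_ge0 kH'.
Let e_ge0 x : 0 <= e x.
Proof. by apply: clip_ge0 => //; exact: cocc_ge0. Qed.
Let me : measurable_fun setT e.
Proof. exact: measurable_clip. Qed.
Let gap_ge0 x : 0 <= dpi k x - e x.
Proof.
rewrite sube_ge0 ?clipx_fin_num //.
exact: le_trans (clipx_le _ _ _ _ _) (cocc_le_occ kH' x).
Qed.
Let mgap : measurable_fun setT (dpi k \- e).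
Proof. exact: emeasurable_funB. Qed.

Lemma integral_Pop_gap_le : \int[mu]_x' Pbar (dpi k \- e) x'
  <= L1dist mu (dbar k) (dpi k) + L1dist mu (dbar k) e.
Proof.
apply: (@le_trans _ _ (\int[mu]_x (dpi k \- e) x)).
  apply: integral_Pop_le => //; last exact: sum_pibar_le1.
  by move=> x a; exact: P1.
rewrite /L1dist -ge0_integralD //; [|exact: measurable_abse_sub..].
apply: ge0_le_integral => //.
- by apply: emeasurable_funD; exact: measurable_abse_sub.
- by move=> x _; exact: sube_le_abse_via.
Qed.

Lemma abse_cocc_occS_le x' : `|dbar k.+1 x' - dpi k.+1 x'|
  <= Pbar (dpi k \- e) x' + `|Pop mu (P k) (pi k) (dpi k) x' - Pbar (dpi k) x'|.
Proof.
have Pbar_split : Pbar (dpi k) x' = Pbar e x' + Pbar (dpi k \- e) x'.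
  rewrite -ge0_PopD //.
  by congr Pop; apply/funext => x /=; rewrite addeC subeK ?clipx_fin_num.
apply: abse_sub_le_via Pbar_split _; [exact: Pop_ge0|exact: Pop_ge0|].
by apply: le_Pop => // x; rewrite lexx dpi_ge0.
Qed.

Lemma L1dist_cocc_occS_le :
  L1dist mu (dbar k.+1) (dpi k.+1)
  <= L1dist mu (dbar k) (dpi k) + L1dist mu (dbar k) e
     + L1dist mu (Pop mu (P k) (pi k) (dpi k)) (Pbar (dpi k)).
Proof.
have mPbar_gap : measurable_fun setT (Pbar (dpi k \- e)) by exact: measurable_Pop.
have mPdiff : measurable_fun setT
    (fun x => `|Pop mu (P k) (pi k) (dpi k) x - Pbar (dpi k) x|).
  by apply: measurable_abse_sub; exact: measurable_Pop.
apply: le_trans (ge0_le_integral _ _ _ _ _ (fun x _ => abse_cocc_occS_le x)) _ => //.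
- exact: measurable_abse_sub (measurable_cocc kH) (measurable_occ kH).
- exact: emeasurable_funD.
rewrite ge0_integralD //; first exact: leeD integral_Pop_gap_le (lexx _).
by move=> x _; exact: Pop_ge0.
Qed.

End step.

End clipped_occupancy.

Theorem proposition2 (R : realType) (dX : measure_display) (X : measurableType dX)
  (mu : {measure set X -> \bar R}) (A : finType) (H : nat)
  (P : nat -> X -> A -> X -> R) (d0 : X -> R)
  (piD : nat -> X -> A -> R) (dD : nat -> X -> R) (Cx Ca : nat -> R)
  (pi : nat -> X -> A -> R) :
  sigma_finite setT mu ->
  (* transition densities *)
  (forall h a, (h < H)%N ->
     measurable_fun setT (fun p : X * X => P h p.1 a p.2)) ->
  (forall h x a x', (h < H)%N -> (0 <= P h x a x')%R) ->
  (forall h x a, (h < H)%N -> \int[mu]_x' (P h x a x')%:E = 1) ->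
  (* initial distribution *)
  measurable_fun setT d0 -> (forall x, (0 <= d0 x)%R) ->
  \int[mu]_x (d0 x)%:E = 1 ->
  (* data policy and data state densities *)
  (forall h a, (h < H)%N -> measurable_fun setT (fun x => piD h x a)) ->
  (forall h x a, (h < H)%N -> (0 <= piD h x a)%R) ->
  (forall h x, (h < H)%N -> (\sum_(a : A) piD h x a)%R = 1%R) ->
  (forall h, (h < H)%N -> measurable_fun setT (dD h)) ->
  (forall h x, (h < H)%N -> (0 <= dD h x)%R) ->
  (forall h, (h < H)%N -> \int[mu]_x (dD h x)%:E = 1) ->
  (* thresholds *)
  (forall h, (h < H)%N -> (0 < Cx h)%R) ->
  (forall h, (h < H)%N -> (0 < Ca h)%R) ->
  (* the Markov policy pi *)
  (forall h a, (h < H)%N -> measurable_fun setT (fun x => pi h x a)) ->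
  (forall h x a, (h < H)%N -> (0 <= pi h x a)%R) ->
  (forall h x, (h < H)%N -> (\sum_(a : A) pi h x a)%R = 1%R) ->
  forall h, (h < H)%N ->
  [/\ (* (1) *)
      (forall x, cocc mu P d0 pi piD dD Cx Ca h x <= occ mu P d0 pi h x),
      (* (2) *)
      ((forall h', (h' < h)%N ->
          (forall x, occ mu P d0 pi h' x <= (Cx h' * dD h' x)%:E) /\
          (forall x a, (pi h' x a <= Ca h' * piD h' x a)%R)) ->
       forall x, cocc mu P d0 pi piD dD Cx Ca h x = occ mu P d0 pi h x)
    & (* (3) *)
      ((1 <= h)%N ->
       L1dist mu (cocc mu P d0 pi piD dD Cx Ca h) (occ mu P d0 pi h)
       <= L1dist mu (cocc mu P d0 pi piD dD Cx Ca h.-1) (occ mu P d0 pi h.-1)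
          + L1dist mu (cocc mu P d0 pi piD dD Cx Ca h.-1)
                      (clipx dD Cx h.-1 (cocc mu P d0 pi piD dD Cx Ca h.-1))
          + L1dist mu (Pop mu (P h.-1) (pi h.-1) (occ mu P d0 pi h.-1))
                      (Pop mu (P h.-1) (pibar pi piD Ca h.-1) (occ mu P d0 pi h.-1)))].
Proof.
move=> mu_sf mP P_ge0 P1 md0 d0_ge0 _ mpiD piD_ge0 _ mdD dD_ge0 _
  Cx_gt0 Ca_gt0 mpi pi_ge0 pi1 h hH.
have hH' := ltnW hH.
split; first exact: (cocc_le_occ (H := H)).
- exact: (cocc_eq_occ (H := H)).
- by case: h hH {hH'} => [//|k] /ltnW kH _; exact: (L1dist_cocc_occS_le (H := H)).
Qed.
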